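(* There is a function $f_1(k,q)$ satisfying the following. Let $k,q\ge 2$ be integers. Let $T$ be a tree whose edges are labeled by elements of $\mathbb{Z}_q$, and let $L$ be a set of leaves of $T$ with $|L|=f_1(k,q)$. Then there exist a subset $L_0\subset L$ with $|L_0|=k$ and a residue $a\in\mathbb{Z}_q$ such that for every three leaves $x_1,x_2,x_3\in L_0$ there is a vertex $v\in V(T)$ such that the paths in $T$ from $v$ to $x_1$, $x_2$, $x_3$ are pairwise disjoint except at $v$ and each has weight $a$ modulo $q$.
   Context: The weight of a path in an edge-labeled tree is the sum (in $\mathbb{Z}_q$) of the labels of its edges. *)

From mathcomp Require Import all_boot all_algebra.
Set Implicit Arguments. Unset Strict Implicit. Unset Printing Implicit Defensive.
Import GRing.Theory.

Definition simple_graph (T : finType) (e : rel T) : Prop :=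
  symmetric e /\ irreflexive e.

(* acyclic: no cycle x -> p_1 -> ... -> p_m -> x with x :: p a simple path
   and m >= 2 (i.e. a cycle of length >= 3). *)
Definition acyclic (T : finType) (e : rel T) : Prop :=
  forall (x : T) (p : seq T),
    path e x p -> uniq (x :: p) -> 2 <= size p -> ~~ e (last x p) x.

Definition is_tree (T : finType) (e : rel T) : Prop :=
  [/\ simple_graph e, (forall x y : T, connect e x y) & acyclic e].

Definition leaves (T : finType) (e : rel T) : {set T} :=
  [set x | #|[set y | e x y]| == 1%N].

Definition tpath (T : finType) (e : rel T) (v : T) (p : seq T) (x : T) : Prop :=
  [/\ path e v p, uniq (v :: p) & last v p = x].

Definition weight (T : finType) (q : nat) (lab : T -> T -> 'Z_q)
  (v : T) (p : seq T) : 'Z_q :=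
  (\sum_(z <- pairmap lab v p) z)%R.

From mathcomp Require Import all_boot all_algebra zify.
Set Implicit Arguments. Unset Strict Implicit. Unset Printing Implicit Defensive.
Import GRing.Theory.

(* Root the tree at a leaf [r] of [L]. Every vertex [x] has a unique path [P x]
   from [r], the ancestors of [x] are the vertices of that path, and the path
   from an ancestor [c] down to [x] has weight [potential x - potential c],
   where [potential x] is the weight of [P x].
   Let m := q^2 (k - 1) + 1. A Ramsey-type descent yields a comb: leaves
   y_1, ..., y_m of [L] and vertices c_1, ..., c_m such that c_i is the lowest
   common ancestor of y_i and y_j whenever i < j. Indeed, at the deepest common
   ancestor c of a set A of at least m^n leaves, either m children of c have
   leaves of A below them, or the subtree of one child keeps at least m^(n-1) of
   them while some leaf of A lies outside it.
   By pigeonhole, k of the pairs (y_i, c_i) share the same potentials (a, b).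
   For i < j < l, the paths from c_j down to y_j and to y_l, and from c_j up to
   c_i and down to y_i, meet only at c_j and all have weight a - b. So
   f_1(k, q) = m^m + 1 works. *)

Lemma prefix_total (X : eqType) (s1 s2 s : seq X) :
  prefix s1 s -> prefix s2 s -> prefix s1 s2 || prefix s2 s1.
Proof.
wlog le_s12 : s1 s2 / size s1 <= size s2 => [Hwlog|].
  by case/orP: (leq_total (size s1) (size s2)) => /Hwlog H p1 p2;
    rewrite ?H // orbC H.
rewrite !prefixE => /eqP E1 /eqP E2; apply/orP; left.
by rewrite -E2 take_takel // E1.
Qed.

Lemma pairwise_total (X : eqType) (R : rel X) (s : seq X) x y :
  pairwise R s -> x \in s -> y \in s -> x != y -> R x y || R y x.
Proof.
elim: s => //= a s IHs /andP [/allP Ra Rs].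
rewrite !inE => /predU1P [-> | xs] /predU1P [-> | ys] xNy.
- by rewrite eqxx in xNy.
- by rewrite Ra.
- by rewrite Ra ?orbT.
- exact: IHs.
Qed.

Lemma pairwise_triples (X : eqType) (R : rel X) (G : X -> X -> X -> Prop)
    (s : seq X) :
  (forall x y z, G x y z -> G y x z) -> (forall x y z, G x y z -> G x z y) ->
  {in s & &, forall x y z, R x y -> R x z -> R y z -> G x y z} ->
  pairwise R s ->
  {in s & &, forall x y z, x != y -> x != z -> y != z -> G x y z}.
Proof.
move=> G213 G132; elim: s => // a s IHs RG /= /andP [/allP Ra Rs].
have RG_s : {in s & &, forall x y z, R x y -> R x z -> R y z -> G x y z}.
  by move=> x y z xs ys zs; apply: RG; rewrite inE ?xs ?ys ?zs orbT.
have G_a y z : y \in s -> z \in s -> y != z -> G a y z.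
  move=> ys zs yNz; have RGa := RG a; rewrite inE eqxx in RGa.
  case/orP: (pairwise_total Rs ys zs yNz) => [Ryz | Rzy]; last apply: G132;
    by apply: RGa; rewrite ?inE ?ys ?zs ?orbT ?Ra.
move=> x y z; rewrite !inE.
case/predU1P => [-> | xs] /predU1P [-> | ys] /predU1P [-> | zs];
  rewrite ?eqxx // => xNy xNz yNz.
- exact: G_a.
- by apply: G213; apply: G_a; rewrite // eq_sym.
- by apply: G132; apply: G213; apply: G_a.
- exact: IHs.
Qed.

Lemma predI_seq0 (X : eqType) (s1 s2 : seq X) :
  (forall w, w \in s1 -> w \notin s2) -> [predI s1 & s2] =i pred0.
Proof.
by move=> s1Ns2 w; rewrite !inE; case: (boolP (w \in s1)) => // /s1Ns2 /negPf.
Qed.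

Lemma predI_seq0C (X : eqType) (s1 s2 : seq X) :
  [predI s1 & s2] =i pred0 -> [predI s2 & s1] =i pred0.
Proof. by move=> s12 w; rewrite -s12 !inE andbC. Qed.

Lemma pigeonhole_imset (I J : finType) (f : I -> J) (A : {set I}) M :
  #|f @: A| * M < #|A| -> exists b, M < #|[set x in A | f x == b]|.
Proof.
move=> small_image; apply/existsP; apply: contraLR small_image.
rewrite negb_exists -leqNgt => /forallP small_fibres.
rewrite -sum1_card (partition_big f (mem (f @: A))) => [|x xA]; last exact: imset_f.
rewrite -sum_nat_const leq_sum // => b _.
by rewrite sum1dep_card leqNgt small_fibres.
Qed.

Lemma pigeonhole_subseq (X : eqType) (J : finType) (f : X -> J) (s : seq X) k :
  #|J| * k.-1 < size s ->
  exists b, exists2 s0, subseq s0 s & size s0 = k /\ all (fun x => f x == b) s0.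
Proof.
move=> small_J.
have [b big_b] : exists b, k.-1 < count (fun x => f x == b) s.
  apply/existsP; apply: contraLR small_J.
  rewrite negb_exists -leqNgt => /forallP small_fibres.
  rewrite -sum1_size (partition_big f xpredT) // -sum_nat_const leq_sum // => b _.
  by rewrite sum1_count leqNgt small_fibres.
exists b, (take k (filter (fun x => f x == b) s)).
  exact: subseq_trans (take_subseq _ _) (filter_subseq _ _).
split; first by rewrite size_takel // size_filter; lia.
by apply/allP => x /mem_take; rewrite mem_filter => /andP [].
Qed.

Lemma last_rev_belast (X : Type) (v : X) (p : seq X) :
  last (last v p) (rev (belast v p)) = v.
Proof.
have := congr1 (last v) (rev_rcons (belast v p) (last v p)).
by rewrite -lastI rev_cons last_rcons.
Qed.

Section Weights.
Variables (T : finType) (q : nat) (lab : T -> T -> 'Z_q).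

Lemma weight_cat v p p' :
  weight lab v (p ++ p') = (weight lab v p + weight lab (last v p) p')%R.
Proof. by rewrite /weight pairmap_cat big_cat. Qed.

Hypothesis lab_sym : forall x y, lab x y = lab y x.

Lemma weight_rev v p : weight lab (last v p) (rev (belast v p)) = weight lab v p.
Proof.
elim: p v => [//|a p IHp] v /=.
rewrite rev_cons -cats1 weight_cat last_rev_belast IHp.
by rewrite /weight /= !big_cons !big_nil addr0 addrC lab_sym.
Qed.

End Weights.

Definition tripod (T : finType) (e : rel T) (q : nat) (lab : T -> T -> 'Z_q)
    (a : 'Z_q) (x1 x2 x3 : T) : Prop :=
  exists v : T, exists p1 p2 p3 : seq T,
    [/\ tpath e v p1 x1, tpath e v p2 x2, tpath e v p3 x3,
        [/\ [predI p1 & p2] =i pred0, [predI p1 & p3] =i pred0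
          & [predI p2 & p3] =i pred0] &
        [/\ weight lab v p1 = a, weight lab v p2 = a & weight lab v p3 = a]].

Section Paths.
Variables (T : finType) (e : rel T).

Lemma tripod_swap12 q (lab : T -> T -> 'Z_q) a x1 x2 x3 :
  tripod e lab a x1 x2 x3 -> tripod e lab a x2 x1 x3.
Proof.
case=> v [p1 [p2 [p3 [t1 t2 t3 [d12 d13 d23] w]]]].
by exists v, p2, p1, p3; split => //; case: w; split => //; exact: predI_seq0C.
Qed.

Lemma tripod_swap23 q (lab : T -> T -> 'Z_q) a x1 x2 x3 :
  tripod e lab a x1 x2 x3 -> tripod e lab a x1 x3 x2.
Proof.
case=> v [p1 [p2 [p3 [t1 t2 t3 [d12 d13 d23] w]]]].
by exists v, p1, p3, p2; split => //; case: w; split => //; exact: predI_seq0C.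
Qed.

Lemma tpath_nil v p : tpath e v p v -> p = [::].
Proof.
case: p => [//|a p] [_ /= /andP [+ _] lastp].
by rewrite -[X in X \notin _]lastp mem_last.
Qed.

Lemma tpath_behead v a p x : tpath e v (a :: p) x -> tpath e a p x.
Proof. by case=> /= /andP [_ pp] /andP [_ up] lp. Qed.

Lemma tpath_cat v p z p' x :
  tpath e v p z -> tpath e z p' x -> (forall w, w \in p' -> w \notin v :: p) ->
  tpath e v (p ++ p') x.
Proof.
move=> [pp up lp] [pp' up' lp'] disj; split.
- by rewrite cat_path pp lp.
- move: up'; rewrite cons_uniq => /andP [_ up'].
  by rewrite -cat_cons cat_uniq up up' andbT; apply/hasPn.
- by rewrite last_cat lp.
Qed.

Hypothesis e_sym : symmetric e.

Lemma rev_path_sym v p : path e (last v p) (rev (belast v p)) = path e v p.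
Proof. by rewrite rev_path; apply: eq_path => y z; rewrite /= e_sym. Qed.

Lemma tpath_rev v p x : tpath e v p x -> tpath e x (rev (belast v p)) v.
Proof.
move=> [pp up <-]; split; last exact: last_rev_belast.
- by rewrite rev_path_sym.
- by rewrite -rev_rcons -lastI rev_uniq.
Qed.

Hypothesis e_acyclic : acyclic e.

(* If the first steps differ, following the first path until it meets the
   second one, and then the second one back to [v], closes a cycle of length
   at least 3. *)
Lemma tpath_head v p p' x :
  tpath e v p x -> tpath e v p' x -> x != v -> head v p = head v p'.
Proof.
move=> [pp up lp] [pp' up' lp'] xNv.
have mem_x s : last v s = x -> x \in s.
  by move=> ls; have := mem_last v s; rewrite ls inE (negPf xNv).
have p_meets_p' : has (mem p') p by apply/hasP; exists x; exact: mem_x.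
move: pp up; case: (split_find p_meets_p') => w s1 s2 wp' s1Np' pp up.
move: s1Np' pp' up'; case/splitPr: wp' => t1 t2 s1Nt pp' up'.
case: (boolP ((s1 == [::]) && (t1 == [::]))) => [/andP [/eqP -> /eqP ->] // | nontriv].
exfalso; set c := rcons s1 w ++ rev t1.
have path_c : path e v (rcons c v).
  have back : path e w (rcons (rev t1) v).
    move: pp'; rewrite -cat_rcons cat_path => /andP [pt1 _].
    by rewrite -rev_cons -(belast_rcons v t1 w) -{1}(last_rcons v t1 w) rev_path_sym.
  by move: pp; rewrite /c rcons_cat !cat_path last_rcons back andbT => /andP [].
move: path_c; rewrite rcons_path => /andP [path_c' ec].
have uniq_c : uniq (v :: c).
  move: up up'; rewrite /c -!cat_cons -rcons_cons !cat_uniq.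
  move=> /andP [-> _] /and3P [+ /hasPn t1N _].
  rewrite cons_uniq => /andP [vNt1 ut1]; rewrite rev_uniq ut1 andbT /=.
  apply/hasPn => z; rewrite mem_rev => zt1.
  rewrite inE mem_rcons !inE !negb_or; apply/and3P; split.
  - by apply: contraNneq vNt1 => <-.
  - by apply: contraNneq (t1N w (mem_head _ _)) => <-; rewrite inE zt1 orbT.
  - by apply: contra s1Nt => zs1; apply/hasP; exists z; rewrite // inE mem_cat zt1.
have size_c : 2 <= size c.
  move: nontriv; rewrite /c size_cat size_rcons size_rev -!size_eq0.
  by case: (size s1) (size t1) => [|?] [|?].
by have := e_acyclic path_c' uniq_c size_c; rewrite ec.
Qed.

Lemma tpath_unique v p p' x : tpath e v p x -> tpath e v p' x -> p = p'.
Proof.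
elim: p v p' => [|a p IHp] v p' tp tp'.
  by case: tp => _ _ /= xv; rewrite -xv in tp'; rewrite (tpath_nil tp').
have xNv : x != v.
  by case: tp => _ /= /andP [vNp _] <-; apply: contraNneq vNp => <-; apply: mem_last.
case: p' tp' => [|a' p'] tp'; first by case: tp' => _ _ /= xv; rewrite xv eqxx in xNv.
have /= aa' := tpath_head tp tp' xNv; rewrite -aa' in tp' *.
by rewrite (IHp a p' (tpath_behead tp) (tpath_behead tp')).
Qed.

End Paths.

Lemma tree_root_paths (T : finType) (e : rel T) (r : T) : is_tree e ->
  exists P : T -> seq T,
    (forall x, tpath e r (P x) x) /\ (forall x p, tpath e r p x -> p = P x).
Proof.
case=> [[e_sym _] e_conn e_acyclic].
have /fin_all_exists [P P_tpath] : forall x, exists p, tpath e r p x.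
  move=> x; case/connectP: (e_conn r x) => p /shortenP [p' pp' up' _] ->.
  by exists p'.
exists P; split => // x p tp; exact (tpath_unique e_sym e_acyclic tp (P_tpath x)).
Qed.

Section RootedTree.
Variables (T : finType) (e : rel T) (r : T) (P : T -> seq T).
Hypothesis e_sym : symmetric e.
Hypothesis P_tpath : forall x, tpath e r (P x) x.
Hypothesis P_unique : forall x p, tpath e r p x -> p = P x.

Lemma path_P x : path e r (P x). Proof. by case: (P_tpath x). Qed.

Lemma last_P x : last r (P x) = x. Proof. by case: (P_tpath x). Qed.

Lemma P_take_index u x : u \in r :: P x -> P u = take (index u (r :: P x)) (P x).
Proof.
move=> ux; set i := index u (r :: P x).
have le_i : i <= size (P x) by rewrite -ltnS -[(size _).+1]/(size (r :: P x)) index_mem.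
have [pP uP _] := P_tpath x.
apply/esym/P_unique; split.
- by move: pP; rewrite -{1}(cat_take_drop i (P x)) cat_path => /andP [].
- exact: (take_uniq i.+1 uP).
- by rewrite (last_nth r) size_takel // -/(take i.+1 (r :: P x)) nth_take // nth_index.
Qed.

Definition ancestor u x := prefix (P u) (P x).

Lemma ancestorE u x : ancestor u x = (u \in r :: P x).
Proof.
apply/idP/idP => [/prefixP [s ->] | ux].
  by rewrite -cat_cons mem_cat -{1}(last_P u) mem_last.
by rewrite /ancestor (P_take_index ux) prefix_take.
Qed.

Lemma ancestor_refl x : ancestor x x. Proof. exact: prefix_refl. Qed.

Lemma ancestor_root x : ancestor r x. Proof. by rewrite ancestorE mem_head. Qed.

Lemma ancestor_trans y x z : ancestor x y -> ancestor y z -> ancestor x z.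
Proof. exact: prefix_trans. Qed.

Lemma ancestor_total x y z :
  ancestor x z -> ancestor y z -> ancestor x y || ancestor y x.
Proof. exact: prefix_total. Qed.

Definition down c x := drop (size (P c)) (P x).

Lemma P_cat_down c x : ancestor c x -> P x = P c ++ down c x.
Proof. by rewrite /ancestor prefixE => /eqP {1}<-; rewrite cat_take_drop. Qed.

Lemma tpath_down c x : ancestor c x -> tpath e c (down c x) x.
Proof.
move=> cx; have [pP uP lP] := P_tpath x; rewrite (P_cat_down cx) in pP uP lP.
split.
- by move: pP; rewrite cat_path last_P => /andP [].
- move: uP; rewrite -cat_cons cat_uniq => /and3P [_ /hasPn cNd ud].
  by rewrite cons_uniq ud andbT; apply/negP => /cNd; rewrite -{1}(last_P c) mem_last.
- by rewrite last_cat last_P in lP.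
Qed.

Lemma mem_down c x w :
  ancestor c x -> (w \in down c x) = ancestor w x && ~~ ancestor w c.
Proof.
move=> cx; have [_ uP _] := P_tpath x.
rewrite !ancestorE (P_cat_down cx) -cat_cons mem_cat in uP *.
move: uP; rewrite cat_uniq => /and3P [_ /hasPn dN _].
by case: (boolP (w \in down c x)) => [/dN /negPf -> | _]; rewrite ?orbT ?orbF ?andbN.
Qed.

Definition child c x := head c (down c x).

Lemma child_in_down c x : ancestor c x -> c != x -> child c x \in down c x.
Proof.
move=> cx; rewrite /child; case Ed: (down c x) => [|w d]; last by rewrite mem_head.
by rewrite -(last_P x) (P_cat_down cx) Ed cats0 last_P eqxx.
Qed.

Lemma P_child c x : ancestor c x -> c != x -> P (child c x) = rcons (P c) (child c x).
Proof.
move=> cx cNx; have wd := child_in_down cx cNx.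
have := wd; rewrite mem_down // !ancestorE => /andP [wx wNc].
have Ed : down c x = child c x :: behead (down c x).
  by move: wd; rewrite /child; case: (down c x).
rewrite (P_take_index wx) (P_cat_down cx) Ed -cat_cons index_cat (negPf wNc).
by rewrite /= eqxx addn0 take_cat ltnNge leqnSn subSnn take_cons take0 cats1.
Qed.

Lemma child_eq c z x : ancestor c z -> c != z -> ancestor z x -> child c x = child c z.
Proof.
move=> cz cNz zx; have := child_in_down cz cNz.
rewrite /child {3}/down (P_cat_down zx) (P_cat_down cz) -catA drop_size_cat //.
by case: (down c z).
Qed.

Definition is_lca c x y :=
  [&& ancestor c x, ancestor c y
    & [forall z, ancestor z x && ancestor z y ==> ancestor z c]].

Lemma is_lcaP c x y :
  reflect [/\ ancestor c x, ancestor c y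
            & forall z, ancestor z x -> ancestor z y -> ancestor z c]
          (is_lca c x y).
Proof.
apply: (iffP and3P) => [[cx cy /forallP lca] | [cx cy lca]]; split => //.
  by move=> z zx zy; apply: implyP (lca z) _; rewrite zx.
by apply/forallP => z; apply/implyP => /andP [zx zy]; apply: lca.
Qed.

Lemma is_lca_child c x y : ancestor c x -> ancestor c y -> c != x -> c != y ->
  child c x != child c y -> is_lca c x y.
Proof.
move=> cx cy cNx cNy children; apply/is_lcaP; split => // z zx zy.
case/orP: (ancestor_total zx cx) => // cz.
have [<- | cNz] := eqVneq c z; first exact: ancestor_refl.
by rewrite (child_eq cz cNz zx) (child_eq cz cNz zy) eqxx in children.
Qed.

(* A leaf other than the root has its parent as only neighbour, so it has no
   child. *)
Lemma leaf_ancestor x y : x \in leaves e -> x != r -> ancestor x y -> x = y.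
Proof.
move=> x_leaf xNr xy; apply/eqP; apply: contraTT x_leaf => xNy.
have w_down := child_in_down xy xNy; set w := child x y in w_down.
have e_xw : e x w.
  by have := path_P w; rewrite /w P_child // rcons_path last_P => /andP [].
case/lastP E: (P x) => [|p' x'].
  by move: xNr; rewrite -(last_P x) E eqxx.
have x'x : x' = x by rewrite -(last_P x) E last_rcons.
set v := last r p'.
have e_xv : e x v by have := path_P x; rewrite E rcons_path x'x e_sym => /andP [].
have vNw : v != w.
  apply: contraTneq w_down => <-; rewrite mem_down // negb_and negbK orbC ancestorE E.
  by rewrite -rcons_cons mem_rcons inE mem_last orbT.
rewrite inE neq_ltn; apply/orP; right.
have neighbours : [set v; w] \subset [set z | e x z].
  by apply/subsetP => z; rewrite !inE => /orP [] /eqP ->.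
by apply: leq_trans (subset_leq_card neighbours); rewrite cards2 vNw.
Qed.

Lemma exists_branching (A : {set T}) :
  1 < #|A| -> {in A, forall x y, ancestor x y -> x = y} ->
  exists c, {in A, forall y, ancestor c y && (c != y)} /\
            forall b, exists2 y, y \in A & child c y != b.
Proof.
move=> A_gt1 A_max.
have r_common : [forall y in A, ancestor r y].
  by apply/forall_inP => y _; apply: ancestor_root.
case: (@arg_maxnP _ r (fun c => [forall y in A, ancestor c y]) (fun c => size (P c))
  r_common) => c /forall_inP cA c_deepest.
have cNA y : y \in A -> c != y.
  move=> yA; apply/eqP => cy; subst y.
  have [y'] : exists y', y' \in A :\ c.
    by apply/card_gt0P; move: A_gt1; rewrite (cardsD1 c A) yA.
  rewrite in_setD1 => /andP [y'Nc y'A].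
  by rewrite (A_max c yA y' (cA y' y'A)) eqxx in y'Nc.
exists c; split => [y yA | b]; first by rewrite cA ?cNA.
apply/exists_inP; apply: contraT => /exists_inPn all_b.
have child_b y : y \in A -> child c y = b by move=> /all_b /negPn /eqP.
have [y0 y0A] : exists y0, y0 \in A by apply/card_gt0P; apply: ltnW.
have b_common : [forall y in A, ancestor b y].
  apply/forall_inP => y yA; rewrite -(child_b y yA).
  by have := child_in_down (cA y yA) (cNA y yA); rewrite mem_down ?cA // => /andP [].
have := c_deepest b b_common.
by rewrite -(child_b y0 y0A) P_child ?cA ?cNA // size_rcons /= ltnn.
Qed.

Definition comb (zs : seq (T * T)) := pairwise (fun u v => is_lca u.2 u.1 v.1) zs.

Lemma star_comb c (A : {set T}) : {in A, forall y, ancestor c y && (c != y)} ->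
  exists zs : seq (T * T), [/\ size zs = #|child c @: A|, uniq (unzip1 zs),
                              {subset unzip1 zs <= A} & comb zs].
Proof.
move=> cA; pose rep b := odflt c [pick y in A | child c y == b].
have repP b : b \in child c @: A -> rep b \in A /\ child c (rep b) = b.
  case/imsetP => y yA ->; rewrite /rep.
  by case: pickP => [z /andP [zA /eqP] // | /(_ y)]; rewrite yA eqxx.
exists [seq (rep b, c) | b <- enum (child c @: A)]; rewrite /unzip1 -map_comp.
split.
- by rewrite size_map cardE.
- rewrite map_inj_in_uniq ?enum_uniq // => b b'; rewrite !mem_enum => bA b'A /= E.
  by rewrite -(repP b bA).2 E (repP b' b'A).2.
- by move=> y /mapP [b]; rewrite mem_enum => /repP [yA _] ->.
rewrite /comb pairwise_map.
have: pairwise [rel b b' | b != b'] (enum (child c @: A)).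
  by rewrite -uniq_pairwise enum_uniq.
apply: (sub_in_pairwise (P := fun b => b \in child c @: A)); last first.
  by apply/allP => b; rewrite mem_enum.
move=> b b' /repP [bA rep_b] /repP [b'A rep_b'] bNb' /=.
have /andP [c_b cNb] := cA _ bA; have /andP [c_b' cNb'] := cA _ b'A.
by apply: is_lca_child; rewrite ?rep_b ?rep_b'.
Qed.

Lemma exists_comb m n (A : {set T}) :
  1 < m -> {in A, forall x y, ancestor x y -> x = y} -> m ^ n <= #|A| ->
  exists zs : seq (T * T), [/\ minn m n <= size zs, uniq (unzip1 zs),
                              {subset unzip1 zs <= A} & comb zs].
Proof.
move=> m_gt1; elim: n A => [|n IHn] A A_max A_big; first by exists [::]; rewrite minn0.
have mn_gt0 : 0 < m ^ n by rewrite expn_gt0 ltnW.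
have A_gt1 : 1 < #|A| by apply: leq_trans A_big; rewrite expnS; nia.
have [c [cA c_branch]] := exists_branching A_gt1 A_max.
have [m_le | lt_m] := leqP m #|child c @: A|.
  have [zs [size_zs *]] := star_comb cA.
  by exists zs; split; rewrite // size_zs; apply: leq_trans m_le; apply: geq_minl.
have [b B_big] : exists b, (m ^ n).-1 < #|[set y in A | child c y == b]|.
  by apply: pigeonhole_imset; rewrite expnS in A_big; nia.
set B := [set y in A | child c y == b] in B_big.
have B_A : B \subset A by apply/subsetP => y; rewrite inE => /andP [].
have B_max : {in B, forall x y, ancestor x y -> x = y}.
  by move=> x /(subsetP B_A); apply: A_max.
have [zs [size_zs uniq_zs zs_B comb_zs]] := IHn B B_max ltac:(lia).
have [y yA yNb] := c_branch b.
have zs_child u : u \in zs -> u.1 \in A /\ child c u.1 = b.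
  by move=> /(map_f fst) /zs_B; rewrite inE => /andP [uA /eqP].
exists ((y, c) :: zs); split.
- by rewrite /=; lia.
- rewrite /= uniq_zs andbT; apply/mapP => [[u /zs_child [_ child_u] yu]].
  by rewrite yu child_u eqxx in yNb.
- by move=> x; rewrite /= inE => /predU1P [-> // | /zs_B]; apply: (subsetP B_A).
rewrite /comb pairwise_cons -/(comb zs) comb_zs andbT.
apply/allP => u /zs_child [uA child_u] /=.
have /andP [c_y cNy] := cA y yA; have /andP [c_u cNu] := cA u.1 uA.
by apply: is_lca_child; rewrite ?child_u.
Qed.

Variables (q : nat) (lab : T -> T -> 'Z_q).
Hypothesis lab_sym : forall x y, lab x y = lab y x.

Definition potential x := weight lab r (P x).

Lemma weight_down c x :
  ancestor c x -> weight lab c (down c x) = (potential x - potential c)%R.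
Proof.
by move=> cx; rewrite /potential (P_cat_down cx) weight_cat last_P addrC addKr.
Qed.

Definition up a c := rev (belast a (down a c)).

Lemma tpath_up a c : ancestor a c -> tpath e c (up a c) a.
Proof. move=> ac; exact (tpath_rev e_sym (tpath_down ac)). Qed.

Lemma weight_up a c :
  ancestor a c -> weight lab c (up a c) = (potential c - potential a)%R.
Proof.
move=> ac; have [_ _ last_d] := tpath_down ac.
by rewrite /up -{1}last_d weight_rev // weight_down.
Qed.

Lemma mem_up a c z : ancestor a c -> z \in c :: up a c -> ancestor z c.
Proof.
move=> ac; rewrite inE mem_rev => /predU1P [-> | /mem_belast].
  exact: ancestor_refl.
by rewrite inE => /predU1P [-> // | ]; rewrite mem_down // => /andP [].
Qed.

Lemma tripod_comb ci yi cj yj yl :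
  is_lca ci yi yj -> is_lca ci yi yl -> is_lca cj yj yl ->
  potential cj = potential ci -> potential yj = potential yi ->
  potential yl = potential yi ->
  tripod e lab (potential yi - potential ci)%R yi yj yl.
Proof.
move=> /is_lcaP [ci_yi ci_yj lca_ij] /is_lcaP [_ ci_yl lca_il].
move=> /is_lcaP [cj_yj cj_yl lca_jl] Ec Ej El.
have ci_cj : ancestor ci cj := lca_jl ci ci_yj ci_yl.
have [_ _ last_up] := tpath_up ci_cj.
have up_cj := mem_up ci_cj.
have disj_p1 y : ancestor cj y ->
    (forall w, ancestor w yi -> ancestor w y -> ancestor w ci) ->
    forall w, w \in up ci cj ++ down ci yi -> w \notin down cj y.
  move=> cj_y lca_iy w; rewrite mem_cat [w \in down cj y]mem_down //.
  case/orP => [w_up | w_down].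
    by rewrite negb_and negbK orbC up_cj // inE w_up orbT.
  move: w_down; rewrite mem_down // => /andP [w_yi wNci]; apply: contra wNci.
  by case/andP => w_y _; apply: lca_iy.
exists cj, (up ci cj ++ down ci yi), (down cj yj), (down cj yl); split.
- apply: tpath_cat (tpath_up ci_cj) (tpath_down ci_yi) _ => w.
  rewrite mem_down // => /andP [w_yi]; apply: contra => /up_cj w_cj.
  exact: lca_ij w w_yi (ancestor_trans w_cj cj_yj).
- exact: tpath_down.
- exact: tpath_down.
- split; apply: predI_seq0; [exact: disj_p1 | exact: disj_p1 | move=> w].
  rewrite !mem_down // => /andP [w_yj wNcj]; apply: contra wNcj.
  by case/andP => w_yl _; apply: lca_jl.
- split; rewrite ?weight_cat ?last_up ?weight_up // weight_down // ?Ej ?El Ec //.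
  by rewrite subrr add0r.
Qed.

Lemma comb_tripod (zs : seq (T * T)) a b : comb zs ->
  {in zs, forall u, potential u.1 = a /\ potential u.2 = b} ->
  {in unzip1 zs & &, forall x1 x2 x3, x1 != x2 -> x1 != x3 -> x2 != x3 ->
     tripod e lab (a - b)%R x1 x2 x3}.
Proof.
move=> comb_zs colour_zs _ _ _ /mapP [u1 u1s ->] /mapP [u2 u2s ->] /mapP [u3 u3s ->].
move=> n12 n13 n23.
apply: (pairwise_triples (G := fun u v w => tripod e lab (a - b)%R u.1 v.1 w.1)
  _ _ _ comb_zs) u1s u2s u3s _ _ _.
- by move=> *; apply: tripod_swap12.
- by move=> *; apply: tripod_swap23.
- move=> u v w /colour_zs [Eu Eu'] /colour_zs [Ev Ev'] /colour_zs [Ew Ew'] uv uw vw.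
  by rewrite /= -Eu -Eu'; apply: (tripod_comb uv uw vw); rewrite ?Eu ?Eu' ?Ev ?Ev' ?Ew.
- by apply: contra_neq n12 => ->.
- by apply: contra_neq n13 => ->.
- by apply: contra_neq n23 => ->.
Qed.
End RootedTree.

Theorem lemma3 :
  exists f1 : nat -> nat -> nat,
  forall (k q : nat), 2 <= k -> 2 <= q ->
  forall (T : finType) (e : rel T) (lab : T -> T -> 'Z_q),
    is_tree e ->
    (forall x y : T, lab x y = lab y x) ->
  forall L : {set T}, L \subset leaves e -> #|L| = f1 k q ->
  exists L0 : {set T}, [/\ L0 \subset L, #|L0| = k &
  exists a : 'Z_q,
    forall x1 x2 x3 : T, x1 \in L0 -> x2 \in L0 -> x3 \in L0 ->
      x1 != x2 -> x1 != x3 -> x2 != x3 ->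
      exists v : T, exists p1 p2 p3 : seq T,
        [/\ tpath e v p1 x1, tpath e v p2 x2, tpath e v p3 x3,
            [/\ [predI p1 & p2] =i pred0, [predI p1 & p3] =i pred0
              & [predI p2 & p3] =i pred0] &
            [/\ weight lab v p1 = a, weight lab v p2 = a
              & weight lab v p3 = a]]].
Proof.
exists (fun k q => ((q * q * k.-1).+1 ^ (q * q * k.-1).+1).+1).
move=> k q k_gt1 q_gt1 T e lab tree lab_sym L L_leaves card_L.
set m := (q * q * k.-1).+1 in card_L; have m_gt1 : 1 < m by rewrite /m; nia.
have e_sym : symmetric e by case: tree => [[]].
have [r rL] : exists r, r \in L by apply/card_gt0P; rewrite card_L.
have [P [P_tpath P_unique]] := tree_root_paths r tree.
have L_max : {in L :\ r, forall x y, ancestor P x y -> x = y}.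
  move=> x; rewrite in_setD1 => /andP [xNr xL] y.
  exact (leaf_ancestor e_sym P_tpath P_unique (subsetP L_leaves x xL) xNr).
have card_Lr : m ^ m <= #|L :\ r|.
  by move: card_L; rewrite (cardsD1 r L) rL add1n => [[->]].
have [zs [size_zs uniq_zs zs_L comb_zs]] :=
  exists_comb P_tpath P_unique m_gt1 L_max card_Lr.
pose colour u := (potential r P lab u.1, potential r P lab u.2).
have few_colours : #|{: 'Z_q * 'Z_q}| * k.-1 < size zs.
  by rewrite card_prod card_ord Zp_cast //; move: size_zs; rewrite minnn; lia.
have [[a b] [s0 s0_zs [size_s0 colour_s0]]] := pigeonhole_subseq colour few_colours.
have s0_sub : subseq (unzip1 s0) (unzip1 zs) := map_subseq _ s0_zs.
exists [set x in unzip1 s0]; split.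
- apply/subsetP => x; rewrite inE => /(mem_subseq s0_sub) /zs_L.
  by rewrite in_setD1 => /andP [].
- by rewrite cardsE (card_uniqP (subseq_uniq s0_sub uniq_zs)) size_map.
exists (a - b)%R => x1 x2 x3; rewrite !inE.
apply: (comb_tripod e_sym P_tpath P_unique lab_sym (subseq_pairwise s0_zs comb_zs)).
by move=> u /(allP colour_s0) /eqP [-> ->].
Qed.
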